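(* Let $\beta<0$, $a,\gamma\in\mathbb{R}$, and let $\Omega\subset\mathbb{R}$ be a compact interval containing $0$ in its interior. Consider the control system on $\mathbb{R}^2$ $$\dot s=\beta(s-\omega),\qquad \dot t=(a\omega+\gamma)s,\qquad \omega\in\Omega .$$ Then: (1) If $\gamma\neq0$, the set $\Omega\times\mathbb{R}$ is the only control set of the system. (2) If $\gamma=0$ and $a\neq 0$, then for every $t\in\mathbb{R}$ the singleton $\{(0,t)\}$ is a control set of the system (and these are distinct control sets).
   Context: Controls are piecewise constant functions $\omega:\mathbb{R}\to\Omega$; $\varphi(\tau,\mathbf v,\omega)$ is the solution at time $\tau$ from $\mathbf v$, and $\mathcal O^+(\mathbf v)$ is the set of points reachable from $\mathbf v$ in nonnegative time. A control set is a nonempty set $\mathcal C\subset\mathbb{R}^2$, maximal with respect to inclusion, such that (i) for every $x\in\mathcal C$ there is a control $\omega$ with $\varphi(\tau,x,\omega)\in\mathcal C$ for all $\tau\ge0$, and (ii) $\mathcal C\subset\overline{\mathcal O^+(x)}$ for all $x\in\mathcal C$. *)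

From Stdlib Require Import Reals.
From Coquelicot Require Import Coquelicot.
Open Scope R_scope.

Definition Omega (lo hi : R) (u : R) : Prop := lo <= u <= hi.

Definition piecewise_constant (w : R -> R) : Prop :=
  forall a b : R, a < b ->
    exists (n : nat) (p : nat -> R),
      p 0%nat = a /\ p n = b /\
      (forall i : nat, (i < n)%nat -> p i < p (S i)) /\
      (forall i : nat, (i < n)%nat ->
         exists c : R, forall r : R, p i < r < p (S i) -> w r = c).

Definition admissible (lo hi : R) (w : R -> R) : Prop :=
  piecewise_constant w /\ forall r : R, Omega lo hi (w r).

Definition rhs_s (beta : R) (x : R * R) (u : R) : R := beta * (fst x - u).
Definition rhs_t (a gamma : R) (x : R * R) (u : R) : R := (a * u + gamma) * fst x.

Definition is_solution (beta a gamma : R) (v : R * R) (w : R -> R)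
  (x : R -> R * R) : Prop :=
  forall tau : R,
    ex_RInt (fun r => rhs_s beta (x r) (w r)) 0 tau /\
    ex_RInt (fun r => rhs_t a gamma (x r) (w r)) 0 tau /\
    fst (x tau) = fst v + RInt (fun r => rhs_s beta (x r) (w r)) 0 tau /\
    snd (x tau) = snd v + RInt (fun r => rhs_t a gamma (x r) (w r)) 0 tau.

Definition reach_plus (beta a gamma lo hi : R) (v : R * R) (y : R * R) : Prop :=
  exists w x tau, admissible lo hi w /\ is_solution beta a gamma v w x /\
    0 <= tau /\ x tau = y.

Definition closure2 (A : R * R -> Prop) (y : R * R) : Prop :=
  forall eps : R, 0 < eps ->
    exists z, A z /\ Rabs (fst z - fst y) < eps /\ Rabs (snd z - snd y) < eps.

Definition cs_props (beta a gamma lo hi : R) (C : R * R -> Prop) : Prop :=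
  (exists v, C v) /\
  (forall v, C v -> exists w x, admissible lo hi w /\
       is_solution beta a gamma v w x /\ forall tau, 0 <= tau -> C (x tau)) /\
  (forall v, C v -> forall y, C y -> closure2 (reach_plus beta a gamma lo hi v) y).

Definition control_set (beta a gamma lo hi : R) (C : R * R -> Prop) : Prop :=
  cs_props beta a gamma lo hi C /\
  forall D : R * R -> Prop, cs_props beta a gamma lo hi D ->
    (forall v, C v -> D v) -> forall v, D v -> C v.

From Stdlib Require Import Reals Lra Lia.
From Coquelicot Require Import Coquelicot.
Open Scope R_scope.

(* The s-equation is decoupled: s relaxes exponentially (beta < 0) towards the
   current control value, so along every admissible trajectory the quantities
   (s - lo) e^(-beta t) and (hi - s) e^(-beta t) are nondecreasing.  Hence no
   reachable point moves away from the strip Omega x R, and a point outside the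
   strip is strictly closer to it after one unit of time, so it cannot be
   approximately reached again: every control set lies in Omega x R.

   Holding the control at c keeps s = c and moves t with speed (a c + gamma) c.
   For gamma <> 0 this speed takes both signs for small c, so one can steer s to
   such values, adjust t at will, and then steer s to any interior value of
   Omega: every point of the open strip is reachable from every point of the
   strip, which is therefore the unique control set.

   For gamma = 0 the function L = a t + a^2 s^2 / (2 beta) satisfies
   dL/dt = a^2 s^2 >= 0 along trajectories.  It is therefore constant on a
   control set, while on the invariant trajectory from a point with s <> 0 it
   increases strictly; so s = 0 and a t is fixed on a control set. *)

(** * Monotonicity along piecewise constant controls *)

Lemma is_RInt_primitive_continuous (f g : R -> R) (c r : R) :
  (forall tau, is_RInt f 0 tau (g tau - c)) -> continuous g r.
Proof.
  intros Hg.
  apply (continuous_ext (fun z => (g z - c) + c)).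
  { intros z; change (g z - c + c = g z); ring. }
  apply (continuous_plus (fun z => g z - c) (fun _ => c)); [|apply continuous_const].
  exact (continuous_RInt_1 f 0 r _ (filter_forall _ Hg)).
Qed.

Lemma is_RInt_primitive_derive (f g h : R -> R) (c r : R) :
  (forall tau, is_RInt f 0 tau (g tau - c)) ->
  locally r (fun z => f z = h z) -> continuous h r -> is_derive g r (h r).
Proof.
  intros Hg Hfh Hh.
  assert (Hd : is_derive (fun z => g z - c) r (f r)).
  { apply (is_derive_RInt f _ 0 r (filter_forall _ Hg)).
    apply (continuous_ext_loc f h); [|exact Hh].
    revert Hfh; apply filter_imp; intros z Hz; symmetry; exact Hz. }
  rewrite <- (locally_singleton _ _ Hfh).
  apply (is_derive_ext (fun z => (g z - c) + c)).
  { intros z; change (g z - c + c = g z); ring. }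
  replace (f r) with (f r + 0) by ring.
  exact (is_derive_plus _ _ _ _ _ Hd (is_derive_const c r)).
Qed.

Lemma partition_monotone (p : nat -> R) (n : nat) :
  (forall i, (i < n)%nat -> p i < p (S i)) ->
  forall i j, (i <= j <= n)%nat -> p i <= p j.
Proof.
  intros Hp i j Hij; induction j as [|j IH].
  - replace i with 0%nat by lia; lra.
  - destruct (Nat.eq_dec i (S j)) as [->|Hne]; [lra|].
    apply Rle_trans with (p j); [apply IH; lia | left; apply Hp; lia].
Qed.

Lemma nondecreasing_of_derive_nonneg (F : R -> R) (a0 b0 : R) :
  a0 < b0 -> (forall r, a0 <= r <= b0 -> continuous F r) ->
  (forall r, a0 < r < b0 -> exists l, is_derive F r l /\ 0 <= l) ->
  F a0 <= F b0.
Proof.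
  intros Hab HF HdF.
  (* The mean value point may be an endpoint, where [Derive F] is meaningless:
     clipping it at [0] changes nothing inside. *)
  destruct (MVT_gen F a0 b0 (fun r => Rmax 0 (Derive F r))) as [c [_ Hc]].
  - rewrite Rmin_left, Rmax_right by lra; intros r Hr.
    destruct (HdF r Hr) as [l [Hl Hl0]].
    rewrite (is_derive_unique F r l Hl), Rmax_right by lra; exact Hl.
  - rewrite Rmin_left, Rmax_right by lra; intros r Hr.
    apply continuity_pt_filterlim, HF, Hr.
  - assert (0 <= Rmax 0 (Derive F c)) by apply Rmax_l; nra.
Qed.

(* [piecewise_constant w] unfolds to [forall a b, a < b -> piecewise_constant_on w a b]. *)
Definition piecewise_constant_on (w : R -> R) (a b : R) : Prop :=
  exists (n : nat) (p : nat -> R),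
    p 0%nat = a /\ p n = b /\
    (forall i : nat, (i < n)%nat -> p i < p (S i)) /\
    (forall i : nat, (i < n)%nat ->
       exists c : R, forall r : R, p i < r < p (S i) -> w r = c).

Lemma nondecreasing_on_pieces (w F : R -> R) (t0 t1 : R) :
  piecewise_constant_on w t0 t1 -> (forall r, continuous F r) ->
  (forall a0 b0 c, t0 <= a0 -> b0 <= t1 -> (forall r, a0 < r < b0 -> w r = c) ->
     forall r, a0 < r < b0 -> exists l, is_derive F r l /\ 0 <= l) ->
  F t0 <= F t1.
Proof.
  intros [n [p [H0 [Hn [Hinc Hconst]]]]] HF HdF.
  pose proof (partition_monotone p n Hinc) as Hmono.
  enough (forall i, (i <= n)%nat -> F t0 <= F (p i)) by (rewrite <- Hn; auto).
  induction i as [|i IH]; intros Hi; [rewrite H0; lra|].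
  destruct (Hconst i ltac:(lia)) as [c Hc].
  apply Rle_trans with (F (p i)); [apply IH; lia|].
  apply nondecreasing_of_derive_nonneg; [apply Hinc; lia | intros; apply HF|].
  apply (HdF _ _ c); auto.
  - rewrite <- H0; apply Hmono; lia.
  - rewrite <- Hn; apply Hmono; lia.
Qed.

Lemma is_solution_is_RInt beta a gamma v w x :
  is_solution beta a gamma v w x <->
  forall tau,
    is_RInt (fun r => rhs_s beta (x r) (w r)) 0 tau (fst (x tau) - fst v) /\
    is_RInt (fun r => rhs_t a gamma (x r) (w r)) 0 tau (snd (x tau) - snd v).
Proof.
  split; intros H tau.
  - destruct (H tau) as [Es [Et [Hs Ht]]].
    rewrite Hs, Ht, !Rplus_minus_l.
    split; apply (RInt_correct (V := R_CompleteNormedModule)); assumption.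
  - destruct (H tau) as [Is It].
    rewrite (is_RInt_unique _ _ _ _ Is), (is_RInt_unique _ _ _ _ It).
    split; [eexists; exact Is|]; split; [eexists; exact It|]; split; ring.
Qed.

Lemma solution_at_0 beta a gamma v w x : is_solution beta a gamma v w x -> x 0 = v.
Proof.
  intros H; destruct (proj1 (is_solution_is_RInt _ _ _ _ _ _) H 0) as [Is It].
  apply (is_RInt_unique (V := R_CompleteNormedModule)) in Is, It.
  rewrite RInt_point in Is, It.
  destruct (x 0), v; simpl in *; unfold zero in *; simpl in *; f_equal; lra.
Qed.

Section Solution.

Variables (beta a gamma : R) (v : R * R) (w : R -> R) (x : R -> R * R).
Hypothesis Hsol : is_solution beta a gamma v w x.

Lemma solution_continuous_fst r : continuous (fun z => fst (x z)) r.
Proof.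
  apply (is_RInt_primitive_continuous (fun r => rhs_s beta (x r) (w r)) _ (fst v)).
  intros tau; exact (proj1 (proj1 (is_solution_is_RInt _ _ _ _ _ _) Hsol tau)).
Qed.

Lemma solution_continuous_snd r : continuous (fun z => snd (x z)) r.
Proof.
  apply (is_RInt_primitive_continuous (fun r => rhs_t a gamma (x r) (w r)) _ (snd v)).
  intros tau; exact (proj2 (proj1 (is_solution_is_RInt _ _ _ _ _ _) Hsol tau)).
Qed.

Variables (a0 b0 c : R).
Hypothesis Hpiece : forall r, a0 < r < b0 -> w r = c.

Lemma control_constant_near r : a0 < r < b0 -> locally r (fun z => w z = c).
Proof.
  intros Hr; apply (locally_interval _ r a0 b0); simpl; try lra.
  intros z Hz1 Hz2; apply Hpiece; simpl in *; lra.
Qed.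

Lemma solution_derive_fst r : a0 < r < b0 ->
  is_derive (fun z => fst (x z)) r (beta * (fst (x r) - c)).
Proof.
  intros Hr.
  apply (is_RInt_primitive_derive (fun r => rhs_s beta (x r) (w r)) _
           (fun z => beta * (fst (x z) - c)) (fst v)).
  - intros tau; exact (proj1 (proj1 (is_solution_is_RInt _ _ _ _ _ _) Hsol tau)).
  - apply (filter_imp (fun z => w z = c)); [|exact (control_constant_near r Hr)].
    intros z Hz; unfold rhs_s; rewrite Hz; reflexivity.
  - apply (continuous_scal_r beta (fun z => fst (x z) - c)).
    apply (continuous_plus (fun z => fst (x z)) (fun _ => - c));
      [apply solution_continuous_fst | apply continuous_const].
Qed.

Lemma solution_derive_snd r : a0 < r < b0 ->
  is_derive (fun z => snd (x z)) r ((a * c + gamma) * fst (x r)).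
Proof.
  intros Hr.
  apply (is_RInt_primitive_derive (fun r => rhs_t a gamma (x r) (w r)) _
           (fun z => (a * c + gamma) * fst (x z)) (snd v)).
  - intros tau; exact (proj2 (proj1 (is_solution_is_RInt _ _ _ _ _ _) Hsol tau)).
  - apply (filter_imp (fun z => w z = c)); [|exact (control_constant_near r Hr)].
    intros z Hz; unfold rhs_t; rewrite Hz; reflexivity.
  - apply (continuous_scal_r (a * c + gamma) (fun z => fst (x z))).
    apply solution_continuous_fst.
Qed.

End Solution.

Lemma is_derive_shifted_mult_exp (f : R -> R) (sigma d k r l : R) :
  is_derive f r l ->
  is_derive (fun z => sigma * (f z - d) * exp (k * z)) r
            (sigma * (l + k * (f r - d)) * exp (k * r)).
Proof.
  intros H; auto_derive; [exists l; exact H|].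
  erewrite is_derive_unique by exact H; ring.
Qed.

Lemma solution_fst_barrier beta a gamma v w x d sigma tau :
  beta < 0 -> piecewise_constant w -> is_solution beta a gamma v w x ->
  (forall r, 0 <= sigma * (w r - d)) -> 0 <= tau ->
  sigma * (fst v - d) <= sigma * (fst (x tau) - d) * exp (- beta * tau).
Proof.
  intros Hb Hw Hsol Hd Htau.
  pose (F z := sigma * (fst (x z) - d) * exp (- beta * z)).
  assert (HF0 : F 0 = sigma * (fst v - d)).
  { unfold F; rewrite (solution_at_0 _ _ _ _ _ _ Hsol), Rmult_0_r, exp_0; ring. }
  rewrite <- HF0; change (F 0 <= F tau).
  destruct Htau as [Htau | <-]; [|lra].
  apply (nondecreasing_on_pieces w F 0 tau (Hw 0 tau Htau)).
  - intros r; unfold F.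
    apply (continuous_mult (fun z => sigma * (fst (x z) - d)) (fun z => exp (- beta * z))).
    + apply (continuous_scal_r sigma (fun z => fst (x z) - d)).
      apply (continuous_plus (fun z => fst (x z)) (fun _ => - d));
        [exact (solution_continuous_fst _ _ _ _ _ _ Hsol r) | apply continuous_const].
    + apply (ex_derive_continuous (fun z => exp (- beta * z))); auto_derive; exact I.
  - intros a0 b0 c _ _ Hc r Hr.
    eexists; split.
    + apply (is_derive_shifted_mult_exp (fun z => fst (x z))).
      exact (solution_derive_fst _ _ _ _ _ _ Hsol _ _ _ Hc r Hr).
    + rewrite <- (Hc r Hr); specialize (Hd r); pose proof (exp_pos (- beta * r)).
      replace (sigma * (beta * (fst (x r) - w r) + - beta * (fst (x r) - d)) * exp (- beta * r))
        with (- beta * (sigma * (w r - d)) * exp (- beta * r)) by ring.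
      apply Rmult_le_pos; [apply Rmult_le_pos|]; lra.
Qed.

Lemma solution_fst_bounds beta a gamma lo hi v w x tau :
  beta < 0 -> admissible lo hi w -> is_solution beta a gamma v w x -> 0 <= tau ->
  lo + (fst v - lo) * exp (beta * tau) <= fst (x tau) <= hi + (fst v - hi) * exp (beta * tau).
Proof.
  intros Hb [Hpc Hw] Hsol Htau.
  assert (Hlo : 1 * (fst v - lo) <= 1 * (fst (x tau) - lo) * exp (- beta * tau)).
  { apply (solution_fst_barrier _ _ _ _ _ _ _ _ _ Hb Hpc Hsol); [|exact Htau].
    intros r; destruct (Hw r); lra. }
  assert (Hhi : -1 * (fst v - hi) <= -1 * (fst (x tau) - hi) * exp (- beta * tau)).
  { apply (solution_fst_barrier _ _ _ _ _ _ _ _ _ Hb Hpc Hsol); [|exact Htau].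
    intros r; destruct (Hw r); lra. }
  assert (Hrescale : forall u u', u <= u' * exp (- beta * tau) -> u * exp (beta * tau) <= u').
  { intros u u' H; pose proof (exp_pos (beta * tau)).
    apply Rmult_le_compat_r with (r := exp (beta * tau)) in H; [|lra].
    replace (u' * exp (- beta * tau) * exp (beta * tau)) with (u' * exp (- beta * tau + beta * tau))
      in H by (rewrite exp_plus; ring).
    replace (- beta * tau + beta * tau) with 0 in H by ring; rewrite exp_0 in H; lra. }
  apply Hrescale in Hlo, Hhi; split; lra.
Qed.

(** * Reachability *)

Definition const_control_trajectory beta a gamma (d : R) (v : R * R) (r : R) : R * R :=
  (d + (fst v - d) * exp (beta * r),
   snd v + (a * d + gamma) * (d * r + (fst v - d) * (exp (beta * r) - 1) / beta)).

Lemma const_control_solution beta a gamma d v : beta <> 0 ->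
  is_solution beta a gamma v (fun _ => d) (const_control_trajectory beta a gamma d v).
Proof.
  intros Hb; apply is_solution_is_RInt; intros tau; unfold rhs_s, rhs_t.
  pose (S r := (fst v - d) * exp (beta * r)).
  pose (T r := (a * d + gamma) * (d * r + (fst v - d) * (exp (beta * r) - 1) / beta)).
  replace (fst _ - fst v) with (S tau - S 0)
    by (unfold S, const_control_trajectory; simpl; rewrite Rmult_0_r, exp_0; ring).
  replace (snd _ - snd v) with (T tau - T 0)
    by (unfold T, const_control_trajectory; simpl; rewrite !Rmult_0_r, exp_0; field; exact Hb).
  split; apply (is_RInt_derive (V := R_CompleteNormedModule)); intros r _;
    unfold S, T, const_control_trajectory; simpl.
  - auto_derive; [exact I | ring].
  - apply (ex_derive_continuous (V := R_NormedModule)); auto_derive; exact I.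
  - auto_derive; [exact I | field; exact Hb].
  - apply (ex_derive_continuous (V := R_NormedModule)); auto_derive; exact I.
Qed.

Lemma admissible_const lo hi d : Omega lo hi d -> admissible lo hi (fun _ => d).
Proof.
  intros Hd; split; [|intros; exact Hd].
  intros a0 b0 Hab; exists 1%nat, (fun i => if Nat.eqb i 0 then a0 else b0).
  repeat split; auto; intros i Hi; replace i with 0%nat by lia; simpl; [exact Hab | exists d; auto].
Qed.

Definition splice {T : Type} (f g : R -> T) (t1 r : R) : T :=
  if Rlt_dec r t1 then f r else g (r - t1).

Lemma splice_lt {T : Type} (f g : R -> T) t1 r : r < t1 -> splice f g t1 r = f r.
Proof. intros H; unfold splice; destruct (Rlt_dec r t1); [reflexivity | lra]. Qed.

Lemma splice_ge {T : Type} (f g : R -> T) t1 r : t1 <= r -> splice f g t1 r = g (r - t1).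
Proof. intros H; unfold splice; destruct (Rlt_dec r t1); [lra | reflexivity]. Qed.

Lemma piecewise_constant_on_ext (w w' : R -> R) a b :
  (forall r, a < r < b -> w r = w' r) ->
  piecewise_constant_on w a b -> piecewise_constant_on w' a b.
Proof.
  intros Hww' [n [p [H0 [Hn [Hinc Hconst]]]]].
  exists n, p; repeat split; auto.
  intros i Hi; destruct (Hconst i Hi) as [c Hc]; exists c; intros r Hr.
  assert (a <= p i) by (rewrite <- H0; apply (partition_monotone p n Hinc); lia).
  assert (p (S i) <= b) by (rewrite <- Hn; apply (partition_monotone p n Hinc); lia).
  rewrite <- Hww' by lra; auto.
Qed.

Lemma piecewise_constant_on_shift (w : R -> R) a b t :
  piecewise_constant_on w a b ->
  piecewise_constant_on (fun r => w (r - t)) (a + t) (b + t).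
Proof.
  intros [n [p [H0 [Hn [Hinc Hconst]]]]].
  exists n, (fun i => p i + t); repeat split; [rewrite H0 | rewrite Hn | |]; auto.
  - intros i Hi; specialize (Hinc i Hi); lra.
  - intros i Hi; destruct (Hconst i Hi) as [c Hc]; exists c; intros r Hr; apply Hc; lra.
Qed.

Lemma piecewise_constant_on_concat (w : R -> R) a m b :
  piecewise_constant_on w a m -> piecewise_constant_on w m b ->
  piecewise_constant_on w a b.
Proof.
  intros [n1 [p1 [H10 [H1n [H1inc H1const]]]]] [n2 [p2 [H20 [H2n [H2inc H2const]]]]].
  pose (q i := if Nat.ltb i n1 then p1 i else p2 (i - n1)%nat).
  assert (Hq1 : forall i, (i <= n1)%nat -> q i = p1 i).
  { intros i Hi; unfold q; destruct (Nat.ltb_spec i n1); [reflexivity|].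
    replace i with n1 by lia; rewrite Nat.sub_diag, H1n, H20; reflexivity. }
  assert (Hq2 : forall i, (n1 <= i)%nat -> q i = p2 (i - n1)%nat).
  { intros i Hi; unfold q; destruct (Nat.ltb_spec i n1); [lia | reflexivity]. }
  exists (n1 + n2)%nat, q; repeat split.
  - rewrite Hq1 by lia; exact H10.
  - rewrite Hq2 by lia; replace (n1 + n2 - n1)%nat with n2 by lia; exact H2n.
  - intros i Hi; destruct (Nat.lt_ge_cases i n1).
    + rewrite !Hq1 by lia; apply H1inc; lia.
    + rewrite !Hq2 by lia; replace (S i - n1)%nat with (S (i - n1)) by lia; apply H2inc; lia.
  - intros i Hi; destruct (Nat.lt_ge_cases i n1).
    + rewrite !Hq1 by lia; apply H1const; lia.
    + rewrite !Hq2 by lia; replace (S i - n1)%nat with (S (i - n1)) by lia; apply H2const; lia.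
Qed.

Lemma piecewise_constant_splice (w1 w2 : R -> R) t1 :
  piecewise_constant w1 -> piecewise_constant w2 ->
  piecewise_constant (splice w1 w2 t1).
Proof.
  intros Hw1 Hw2 a b Hab.
  assert (Hleft : forall b', a < b' <= t1 -> piecewise_constant_on (splice w1 w2 t1) a b').
  { intros b' Hb'; apply (piecewise_constant_on_ext w1);
      [intros r Hr; rewrite splice_lt by lra; reflexivity|].
    apply Hw1; lra. }
  assert (Hright : forall a', t1 <= a' < b -> piecewise_constant_on (splice w1 w2 t1) a' b).
  { intros a' Ha'; apply (piecewise_constant_on_ext (fun r => w2 (r - t1)));
      [intros r Hr; rewrite splice_ge by lra; reflexivity|].
    replace a' with (a' - t1 + t1) by ring; replace b with (b - t1 + t1) by ring.
    apply piecewise_constant_on_shift, Hw2; lra. }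
  destruct (Rle_lt_dec b t1); [apply Hleft; lra|].
  destruct (Rle_lt_dec t1 a); [apply Hright; lra|].
  apply (piecewise_constant_on_concat _ a t1 b); [apply Hleft | apply Hright]; lra.
Qed.

Lemma admissible_splice lo hi (w1 w2 : R -> R) t1 :
  admissible lo hi w1 -> admissible lo hi w2 -> admissible lo hi (splice w1 w2 t1).
Proof.
  intros [Hpc1 Hw1] [Hpc2 Hw2]; split; [apply piecewise_constant_splice; assumption|].
  intros r; unfold splice; destruct (Rlt_dec r t1); auto.
Qed.

Lemma is_RInt_splice (F F1 F2 g g1 g2 : R -> R) (c t1 tau : R) :
  0 <= t1 ->
  (forall r, r < t1 -> F r = F1 r) -> (forall r, t1 < r -> F r = F2 (r - t1)) ->
  (forall r, r < t1 -> g r = g1 r) -> (forall r, t1 <= r -> g r = g2 (r - t1)) ->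
  (forall s, is_RInt F1 0 s (g1 s - c)) ->
  (forall s, is_RInt F2 0 s (g2 s - g1 t1)) ->
  is_RInt F 0 tau (g tau - c).
Proof.
  intros Ht1 HF1 HF2 Hg1 Hg2 I1 I2.
  assert (Hbefore : forall s, s <= t1 -> is_RInt F 0 s (g1 s - c)).
  { intros s Hs; apply (is_RInt_ext F1); [|apply I1].
    intros r Hr; symmetry; apply HF1.
    assert (Rmax 0 s <= t1) by (apply Rmax_lub; lra); lra. }
  destruct (Rlt_le_dec tau t1) as [Htau|Htau]; [rewrite Hg1 by lra; apply Hbefore; lra|].
  assert (Hafter : is_RInt F t1 tau (g2 (tau - t1) - g1 t1)).
  { assert (I := I2 (tau - t1)).
    replace 0 with (1 * t1 + - t1) in I by ring.
    replace (tau - t1) with (1 * tau + - t1) in I at 1 by ring.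
    apply (is_RInt_comp_lin (V := R_NormedModule)) in I.
    apply (is_RInt_ext (fun y => scal 1 (F2 (1 * y + - t1))) F t1 tau); [|exact I].
    rewrite Rmin_left, Rmax_right by lra; intros r Hr.
    rewrite HF2 by lra; change (1 * F2 (1 * r + - t1) = F2 (r - t1)).
    rewrite Rmult_1_l; f_equal; ring. }
  rewrite Hg2 by lra.
  replace (g2 (tau - t1) - c) with (plus (g1 t1 - c) (g2 (tau - t1) - g1 t1))
    by (unfold plus; simpl; ring).
  apply (is_RInt_Chasles (V := R_NormedModule) F 0 t1 tau); [apply Hbefore; lra | exact Hafter].
Qed.

Lemma is_solution_splice beta a gamma v (w1 w2 : R -> R) (x1 x2 : R -> R * R) t1 :
  0 <= t1 -> is_solution beta a gamma v w1 x1 -> is_solution beta a gamma (x1 t1) w2 x2 ->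
  is_solution beta a gamma v (splice w1 w2 t1) (splice x1 x2 t1).
Proof.
  intros Ht1 S1 S2; apply is_solution_is_RInt; intros tau.
  pose proof (proj1 (is_solution_is_RInt _ _ _ _ _ _) S1) as I1.
  pose proof (proj1 (is_solution_is_RInt _ _ _ _ _ _) S2) as I2.
  split; [apply (is_RInt_splice _ (fun r => rhs_s beta (x1 r) (w1 r))
                  (fun r => rhs_s beta (x2 r) (w2 r)) (fun r => fst (splice x1 x2 t1 r))
                  (fun r => fst (x1 r)) (fun r => fst (x2 r)) _ t1)
         |apply (is_RInt_splice _ (fun r => rhs_t a gamma (x1 r) (w1 r))
                  (fun r => rhs_t a gamma (x2 r) (w2 r)) (fun r => snd (splice x1 x2 t1 r))
                  (fun r => snd (x1 r)) (fun r => snd (x2 r)) _ t1)];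
    try (intros s; apply I1); try (intros s; apply I2); try exact Ht1;
    intros r Hr; rewrite ?splice_lt, ?splice_ge by lra; reflexivity.
Qed.

Lemma reach_plus_trans beta a gamma lo hi u y z :
  reach_plus beta a gamma lo hi u y -> reach_plus beta a gamma lo hi y z ->
  reach_plus beta a gamma lo hi u z.
Proof.
  intros [w1 [x1 [t1 [A1 [S1 [T1 <-]]]]]] [w2 [x2 [t2 [A2 [S2 [T2 <-]]]]]].
  exists (splice w1 w2 t1), (splice x1 x2 t1), (t1 + t2); split; [|split; [|split]].
  - apply admissible_splice; assumption.
  - apply is_solution_splice; assumption.
  - lra.
  - rewrite splice_ge by lra; f_equal; ring.
Qed.

Lemma reach_plus_const beta a gamma lo hi d v tau :
  beta <> 0 -> Omega lo hi d -> 0 <= tau ->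
  reach_plus beta a gamma lo hi v (const_control_trajectory beta a gamma d v tau).
Proof.
  intros Hb Hd Htau; exists (fun _ => d), (const_control_trajectory beta a gamma d v), tau.
  split; [apply admissible_const, Hd|]; split; [apply const_control_solution, Hb|]; auto.
Qed.

Lemma reach_plus_refl beta a gamma lo hi v :
  beta <> 0 -> lo <= hi -> reach_plus beta a gamma lo hi v v.
Proof.
  intros Hb Hlh.
  replace v with (const_control_trajectory beta a gamma lo v 0) at 2.
  - apply reach_plus_const; unfold Omega; lra.
  - unfold const_control_trajectory; rewrite !Rmult_0_r, exp_0.
    destruct v; simpl; f_equal; field; exact Hb.
Qed.

Lemma reach_plus_hold beta a gamma lo hi d t T :
  beta <> 0 -> Omega lo hi d -> 0 <= T ->
  reach_plus beta a gamma lo hi (d, t) (d, t + (a * d + gamma) * d * T).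
Proof.
  intros Hb Hd HT.
  replace (d, t + (a * d + gamma) * d * T) with (const_control_trajectory beta a gamma d (d, t) T).
  - apply reach_plus_const; assumption.
  - unfold const_control_trajectory; simpl; f_equal; field; exact Hb.
Qed.

Lemma exp_attains_unit_interval beta r : beta < 0 -> 0 < r <= 1 ->
  exists tau, 0 <= tau /\ exp (beta * tau) = r.
Proof.
  intros Hb Hr; exists (ln r / beta); split.
  - assert (ln r <= 0) by (rewrite <- ln_1; apply ln_le; lra).
    unfold Rdiv; assert (/ beta < 0) by (apply Rinv_lt_0_compat, Hb); nra.
  - replace (beta * (ln r / beta)) with (ln r) by (field; lra); apply exp_ln; lra.
Qed.

Lemma reach_plus_fst_transfer beta a gamma lo hi p q :
  beta < 0 -> Omega lo hi p -> lo < q < hi ->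
  exists K, forall t, reach_plus beta a gamma lo hi (p, t) (q, t + K).
Proof.
  intros Hb Hp Hq.
  assert (Htarget : exists d, Omega lo hi d /\ p <> d /\ 0 < (q - d) / (p - d) <= 1).
  { unfold Omega in *; destruct (Rle_lt_dec p q).
    - exists hi; split; [lra|]; split; [lra|].
      replace ((q - hi) / (p - hi)) with ((hi - q) / (hi - p)) by (field; lra).
      split; [apply Rdiv_lt_0_compat | rewrite <- Rdiv_le_1]; lra.
    - exists lo; split; [lra|]; split; [lra|].
      split; [apply Rdiv_lt_0_compat | rewrite <- Rdiv_le_1]; lra. }
  destruct Htarget as [d [Hd [Hpd Hratio]]].
  destruct (exp_attains_unit_interval beta _ Hb Hratio) as [tau [Htau Hexp]].
  exists ((a * d + gamma) * (d * tau + (p - d) * (exp (beta * tau) - 1) / beta)); intros t.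
  replace (q, _) with (const_control_trajectory beta a gamma d (p, t) tau).
  - apply reach_plus_const; auto; lra.
  - unfold const_control_trajectory; simpl; rewrite Hexp; f_equal; field.
    intros E; apply Hpd; lra.
Qed.

Lemma hold_rate_both_signs a gamma lo hi :
  gamma <> 0 -> lo < 0 < hi ->
  exists cp cm, lo < cp < hi /\ lo < cm < hi /\
    0 < (a * cp + gamma) * cp /\ (a * cm + gamma) * cm < 0.
Proof.
  intros Hg Hl.
  (* Take [c = +-gamma delta] with [delta] small: [(a c + gamma) c] has the sign of [gamma c]. *)
  pose (m := Rmin 1 (Rmin hi (- lo))).
  assert (Hm : 0 < m /\ m <= 1 /\ m <= hi /\ m <= - lo).
  { unfold m; repeat split;
      [repeat apply Rmin_glb_lt; lra | apply Rmin_l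
      | eapply Rle_trans; [apply Rmin_r | apply Rmin_l]
      | eapply Rle_trans; [apply Rmin_r | apply Rmin_r]]. }
  pose (N := 2 * (1 + Rabs a + Rabs gamma)).
  pose proof (Rabs_pos a); pose proof (Rabs_pos gamma).
  pose proof (Rle_abs a); pose proof (Rle_abs (- a)); rewrite Rabs_Ropp in *.
  pose proof (Rle_abs gamma); pose proof (Rle_abs (- gamma)); rewrite Rabs_Ropp in *.
  assert (HN : 0 < N) by (unfold N; lra).
  pose (delta := m / N).
  assert (Hdelta : delta * N = m) by (unfold delta; field; lra).
  assert (Hdelta0 : 0 < delta) by (apply Rdiv_lt_0_compat; lra).
  assert (Ha : Rabs a * delta < 1).
  { assert (Rabs a * delta * N < 1 * N) by (rewrite Rmult_assoc, Hdelta; unfold N; nra); nra. }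
  assert (Hgd : Rabs gamma * delta < m).
  { assert (Rabs gamma * delta * N < m * N) by (rewrite Rmult_assoc, Hdelta; unfold N; nra); nra. }
  assert (Hgg : 0 < gamma * gamma) by (apply Rsqr_pos_lt, Hg).
  exists (gamma * delta), (- gamma * delta); repeat split; try nra.
  - replace (_ * _) with (gamma * gamma * (delta * (1 + a * delta))) by ring.
    apply Rmult_lt_0_compat; [exact Hgg|]; apply Rmult_lt_0_compat; nra.
  - replace (_ * _) with (- (gamma * gamma * (delta * (1 - a * delta)))) by ring.
    apply Ropp_lt_gt_0_contravar, Rmult_lt_0_compat; [exact Hgg|]; apply Rmult_lt_0_compat; nra.
Qed.

Lemma nonneg_combination vp vm D : 0 < vp -> vm < 0 ->
  exists Tp Tm, 0 <= Tp /\ 0 <= Tm /\ vp * Tp + vm * Tm = D.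
Proof.
  intros Hp Hm; destruct (Rle_lt_dec 0 D).
  - exists (D / vp), 0; repeat split; [apply Rdiv_le_0_compat; lra | lra | field; lra].
  - exists 0, (D / vm); repeat split; [lra | | field; lra].
    unfold Rdiv; assert (/ vm < 0) by (apply Rinv_lt_0_compat, Hm); nra.
Qed.

Lemma reach_plus_interior beta a gamma lo hi s1 t1 s2 t2 :
  beta < 0 -> gamma <> 0 -> lo < 0 < hi -> Omega lo hi s1 -> lo < s2 < hi ->
  reach_plus beta a gamma lo hi (s1, t1) (s2, t2).
Proof.
  intros Hb Hg Hl Hs1 Hs2.
  destruct (hold_rate_both_signs a gamma lo hi Hg Hl) as [cp [cm [Hcp [Hcm [Hvp Hvm]]]]].
  destruct (reach_plus_fst_transfer beta a gamma lo hi s1 cp) as [K1 HK1]; auto.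
  destruct (reach_plus_fst_transfer beta a gamma lo hi cp cm) as [K2 HK2]; auto.
  { unfold Omega; lra. }
  destruct (reach_plus_fst_transfer beta a gamma lo hi cm s2) as [K3 HK3]; auto.
  { unfold Omega; lra. }
  destruct (nonneg_combination _ _ (t2 - t1 - K1 - K2 - K3) Hvp Hvm) as [Tp [Tm [HTp [HTm HT]]]].
  replace t2 with (t1 + K1 + (a * cp + gamma) * cp * Tp + K2 + (a * cm + gamma) * cm * Tm + K3)
    by lra.
  assert (Hb0 : beta <> 0) by (apply Rlt_not_eq, Hb).
  eapply reach_plus_trans; [apply HK1|].
  eapply reach_plus_trans; [apply reach_plus_hold; [exact Hb0 | unfold Omega; lra | exact HTp]|].
  eapply reach_plus_trans; [apply HK2|].
  eapply reach_plus_trans; [apply reach_plus_hold; [exact Hb0 | unfold Omega; lra | exact HTm]|].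
  apply HK3.
Qed.

Lemma reach_plus_fst_bounds beta a gamma lo hi u z :
  beta < 0 -> reach_plus beta a gamma lo hi u z ->
  Rmin lo (fst u) <= fst z <= Rmax hi (fst u).
Proof.
  intros Hb [w [x [tau [Hw [Hsol [Htau <-]]]]]].
  destruct (solution_fst_bounds _ _ _ _ _ _ _ _ tau Hb Hw Hsol Htau) as [Hlo Hhi].
  assert (exp (beta * tau) <= 1).
  { rewrite <- exp_0; destruct Htau as [Htau | <-];
      [left; apply exp_increasing; nra | rewrite Rmult_0_r; lra]. }
  pose proof (exp_pos (beta * tau)).
  unfold Rmin, Rmax; destruct (Rle_dec lo (fst u)), (Rle_dec hi (fst u)); split; nra.
Qed.

(** * Closures and control sets *)

Lemma closure2_lower_bound (f : R * R -> R) (A : R * R -> Prop) y K :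
  continuous f y -> closure2 A y -> (forall z, A z -> K <= f z) -> K <= f y.
Proof.
  intros Hf Hcl HA; apply Rnot_lt_le; intros Hlt.
  assert (Hpos : 0 < K - f y) by lra.
  destruct (proj1 (filterlim_locally f (f y)) Hf (mkposreal _ Hpos)) as [eps Heps].
  destruct (Hcl eps (cond_pos eps)) as [z [Az [H1 H2]]].
  assert (Hz : ball (f y) (K - f y) (f z)) by (apply Heps; split; assumption).
  unfold ball in Hz; simpl in Hz; unfold AbsRing_ball, abs, minus, plus, opp in Hz; simpl in Hz.
  specialize (HA z Az); apply Rabs_def2 in Hz; lra.
Qed.

Lemma closure2_upper_bound (f : R * R -> R) (A : R * R -> Prop) y K :
  continuous f y -> closure2 A y -> (forall z, A z -> f z <= K) -> f y <= K.
Proof.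
  intros Hf Hcl HA.
  assert (- K <= - f y); [|lra].
  apply (closure2_lower_bound (fun z => - f z) A y (- K)); auto.
  - exact (continuous_opp f y Hf).
  - intros z Az; specialize (HA z Az); lra.
Qed.

Lemma closure2_mono (A B : R * R -> Prop) y :
  (forall z, A z -> B z) -> closure2 A y -> closure2 B y.
Proof.
  intros HAB Hcl eps Heps; destruct (Hcl eps Heps) as [z [Az Hz]]; exists z; auto.
Qed.

Lemma closure2_self (A : R * R -> Prop) y : A y -> closure2 A y.
Proof.
  intros Ay eps Heps; exists y; rewrite Rminus_diag, Rminus_diag, Rabs_R0; auto.
Qed.

Lemma closure2_open_strip lo hi y :
  lo < hi -> Omega lo hi (fst y) -> closure2 (fun z => lo < fst z < hi) y.
Proof.
  intros Hlh [Hlo Hhi] eps Heps.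
  pose (m := (lo + hi) / 2).
  pose proof (Rabs_pos (m - fst y)).
  pose (theta := Rmin (1 / 2) (eps / (Rabs (m - fst y) + 1))).
  assert (Htheta0 : 0 < theta) by (apply Rmin_glb_lt; [lra | apply Rdiv_lt_0_compat; lra]).
  assert (Htheta1 : theta <= 1 / 2) by apply Rmin_l.
  assert (Htheta_eps : theta * (Rabs (m - fst y) + 1) <= eps).
  { assert (Hle : theta <= eps / (Rabs (m - fst y) + 1)) by apply Rmin_r.
    apply Rmult_le_compat_r with (r := Rabs (m - fst y) + 1) in Hle; [|lra].
    replace (eps / _ * _) with eps in Hle by (field; lra); exact Hle. }
  exists (fst y + theta * (m - fst y), snd y); simpl.
  split; [unfold m; split; nra|]; split.
  - replace (fst y + theta * (m - fst y) - fst y) with (theta * (m - fst y)) by ring.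
    rewrite Rabs_mult, (Rabs_pos_eq theta) by lra; nra.
  - rewrite Rminus_diag, Rabs_R0; exact Heps.
Qed.

Lemma cs_props_fst_in_Omega beta a gamma lo hi D v :
  beta < 0 -> cs_props beta a gamma lo hi D -> D v -> Omega lo hi (fst v).
Proof.
  intros Hb [_ [Hinv Happrox]] Dv.
  destruct (Hinv v Dv) as [w [x [Hw [Hsol Hstay]]]].
  assert (Hcl := Happrox (x 1) (Hstay 1 ltac:(lra)) v Dv).
  assert (Hfst : continuous fst v) by (destruct v; apply continuous_fst).
  assert (Hlo : Rmin lo (fst (x 1)) <= fst v).
  { apply (closure2_lower_bound fst _ _ _ Hfst Hcl).
    intros z Hz; apply (reach_plus_fst_bounds _ _ _ _ _ _ _ Hb Hz). }
  assert (Hhi : fst v <= Rmax hi (fst (x 1))).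
  { apply (closure2_upper_bound fst _ _ _ Hfst Hcl).
    intros z Hz; apply (reach_plus_fst_bounds _ _ _ _ _ _ _ Hb Hz). }
  (* [x 1] lies strictly closer to the strip than [v] does. *)
  destruct (solution_fst_bounds _ _ _ _ _ _ _ _ 1 Hb Hw Hsol ltac:(lra)) as [B1 B2].
  assert (exp (beta * 1) < exp 0) by (apply exp_increasing; lra); rewrite exp_0 in *.
  pose proof (exp_pos (beta * 1)).
  unfold Omega, Rmin, Rmax in *.
  destruct (Rle_dec lo (fst (x 1))), (Rle_dec hi (fst (x 1))); split; nra.
Qed.

Lemma strip_cs_props beta a gamma lo hi :
  beta < 0 -> gamma <> 0 -> lo < 0 < hi ->
  cs_props beta a gamma lo hi (fun p => Omega lo hi (fst p)).
Proof.
  intros Hb Hg Hl; split; [|split].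
  - exists (0, 0); unfold Omega; simpl; lra.
  - intros v Hv; exists (fun _ => fst v), (const_control_trajectory beta a gamma (fst v) v).
    split; [apply admissible_const, Hv|]; split; [apply const_control_solution, Rlt_not_eq, Hb|].
    intros tau _; unfold const_control_trajectory; simpl.
    replace (fst v + (fst v - fst v) * exp (beta * tau)) with (fst v) by ring; exact Hv.
  - intros [s t] Hv y Hy.
    apply (closure2_mono (fun z => lo < fst z < hi));
      [|apply closure2_open_strip; [lra | exact Hy]].
    intros [s' t'] Hz; apply reach_plus_interior; auto.
Qed.

Definition lyapunov beta a (p : R * R) : R :=
  a * snd p + a * a / (2 * beta) * (fst p * fst p).

Lemma lyapunov_continuous beta a y : continuous (lyapunov beta a) y.
Proof.
  destruct y as [s t]; unfold lyapunov.
  apply (continuous_plus (fun p : R * R => a * snd p)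
           (fun p => a * a / (2 * beta) * (fst p * fst p))).
  - apply (continuous_scal_r a (@snd R R)), continuous_snd.
  - apply (continuous_scal_r _ (fun p : R * R => fst p * fst p)).
    apply (continuous_mult (@fst R R) (@fst R R)); apply continuous_fst.
Qed.

Lemma is_derive_lyapunov_comp beta a e (f g : R -> R) r lf lg :
  is_derive f r lf -> is_derive g r lg ->
  is_derive (fun z => lyapunov beta a (f z, g z) - e * z) r
            (a * lg + a * a / (2 * beta) * (2 * f r * lf) - e).
Proof.
  intros Hf Hg; unfold lyapunov; simpl.
  auto_derive; [repeat split; eexists; eassumption|].
  do 2 (erewrite is_derive_unique by eassumption); ring.
Qed.

Lemma lyapunov_growth beta a v w x eps t0 t1 :
  beta <> 0 -> piecewise_constant w -> is_solution beta a 0 v w x -> t0 <= t1 ->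
  (forall r, t0 < r < t1 -> eps <= a * a * (fst (x r) * fst (x r))) ->
  lyapunov beta a (x t0) + eps * (t1 - t0) <= lyapunov beta a (x t1).
Proof.
  intros Hb Hw Hsol Ht Heps.
  pose (F z := lyapunov beta a (x z) - eps * z).
  enough (F t0 <= F t1) by (unfold F in *; lra).
  destruct Ht as [Ht | <-]; [|lra].
  apply (nondecreasing_on_pieces w F t0 t1 (Hw t0 t1 Ht)).
  - intros r; apply (continuous_minus (fun z => lyapunov beta a (x z)) (fun z => eps * z)).
    + apply (continuous_comp_2 (fun z => fst (x z)) (fun z => snd (x z))
               (fun s t => lyapunov beta a (s, t)));
        [apply (solution_continuous_fst _ _ _ _ _ _ Hsol)
        |apply (solution_continuous_snd _ _ _ _ _ _ Hsol)
        |apply lyapunov_continuous].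
    + apply (ex_derive_continuous (V := R_NormedModule) (fun z => eps * z)); auto_derive; exact I.
  - intros a0 b0 c Ha0 Hb0 Hc r Hr; eexists; split.
    + apply (is_derive_lyapunov_comp beta a eps (fun z => fst (x z)) (fun z => snd (x z))).
      * exact (solution_derive_fst _ _ _ _ _ _ Hsol _ _ _ Hc r Hr).
      * exact (solution_derive_snd _ _ _ _ _ _ Hsol _ _ _ Hc r Hr).
    + replace (a * ((a * c + 0) * fst (x r))
                 + a * a / (2 * beta) * (2 * fst (x r) * (beta * (fst (x r) - c))) - eps)
        with (a * a * (fst (x r) * fst (x r)) - eps) by (field; exact Hb).
      specialize (Heps r ltac:(lra)); lra.
Qed.

Lemma reach_plus_lyapunov beta a lo hi u z :
  beta <> 0 -> reach_plus beta a 0 lo hi u z -> lyapunov beta a u <= lyapunov beta a z.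
Proof.
  intros Hb [w [x [tau [[Hw _] [Hsol [Htau <-]]]]]].
  assert (Hgrowth : lyapunov beta a (x 0) + 0 * (tau - 0) <= lyapunov beta a (x tau)).
  { apply (lyapunov_growth _ _ u w); auto; intros r _; nra. }
  rewrite (solution_at_0 _ _ _ _ _ _ Hsol) in Hgrowth; lra.
Qed.

Lemma cs_props_lyapunov_le beta a lo hi D p q :
  beta <> 0 -> cs_props beta a 0 lo hi D -> D p -> D q ->
  lyapunov beta a p <= lyapunov beta a q.
Proof.
  intros Hb [_ [_ Happrox]] Dp Dq.
  apply (closure2_lower_bound (lyapunov beta a) _ _ _ (lyapunov_continuous _ _ _)
           (Happrox p Dp q Dq)).
  intros z Hz; exact (reach_plus_lyapunov _ _ _ _ _ _ Hb Hz).
Qed.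

Lemma cs_props_fst_zero beta a lo hi D v :
  beta <> 0 -> a <> 0 -> cs_props beta a 0 lo hi D -> D v -> fst v = 0.
Proof.
  intros Hb Ha HD Dv; destruct (Req_dec (fst v) 0) as [|Hv]; [assumption | exfalso].
  destruct (proj1 (proj2 HD) v Dv) as [w [x [[Hw _] [Hsol Hstay]]]].
  (* Along [x] the Lyapunov function grows at a positive rate until [fst x] leaves a
     neighbourhood of [fst v], but it cannot grow inside [D]. *)
  assert (Hpos : 0 < Rabs (fst v) / 2) by (apply Rdiv_lt_0_compat; [apply Rabs_pos_lt, Hv | lra]).
  destruct (proj1 (filterlim_locally _ _) (solution_continuous_fst _ _ _ _ _ _ Hsol 0)
              (mkposreal _ Hpos)) as [delta Hdelta].
  pose (T := delta / 2).
  assert (HT : 0 < T) by (apply Rdiv_lt_0_compat; [apply cond_pos | lra]).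
  assert (Hnear : forall r, 0 < r < T -> fst v * fst v / 4 <= fst (x r) * fst (x r)).
  { intros r Hr.
    assert (Hball : ball 0 delta r).
    { unfold ball; simpl; unfold AbsRing_ball, abs, minus, plus, opp; simpl.
      rewrite Ropp_0, Rplus_0_r, Rabs_pos_eq; unfold T in Hr; lra. }
    specialize (Hdelta r Hball); unfold ball in Hdelta; simpl in Hdelta.
    unfold AbsRing_ball, abs, minus, plus, opp in Hdelta; simpl in Hdelta.
    rewrite (solution_at_0 _ _ _ _ _ _ Hsol) in Hdelta.
    pose proof (Rabs_triang_inv (fst v) (fst (x r))).
    replace (fst (x r) + - fst v) with (- (fst v - fst (x r))) in Hdelta by ring.
    rewrite Rabs_Ropp in Hdelta.
    assert (Hsq : forall y, y * y = Rabs y * Rabs y)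
      by (intros y; rewrite <- Rabs_mult; symmetry; apply Rabs_pos_eq; nra).
    rewrite (Hsq (fst v)), (Hsq (fst (x r))); pose proof (Rabs_pos (fst v)); nra. }
  assert (Hgrowth : lyapunov beta a (x 0) + a * a * (fst v * fst v / 4) * (T - 0)
                    <= lyapunov beta a (x T)).
  { apply (lyapunov_growth _ _ v w); auto; [lra|].
    intros r Hr; specialize (Hnear r Hr); pose proof (Rle_0_sqr a); unfold Rsqr in *; nra. }
  assert (Hback : lyapunov beta a (x T) <= lyapunov beta a v).
  { apply (cs_props_lyapunov_le _ _ lo hi D); [exact Hb | exact HD | apply Hstay; lra | exact Dv]. }
  rewrite (solution_at_0 _ _ _ _ _ _ Hsol) in Hgrowth.
  assert (0 < a * a * (fst v * fst v / 4) * (T - 0)); [|lra].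
  pose proof (Rsqr_pos_lt a Ha); pose proof (Rsqr_pos_lt (fst v) Hv); unfold Rsqr in *.
  apply Rmult_lt_0_compat; [apply Rmult_lt_0_compat|]; lra.
Qed.

Lemma point_cs_props beta a lo hi t :
  beta <> 0 -> lo <= 0 <= hi -> cs_props beta a 0 lo hi (fun p => p = (0, t)).
Proof.
  intros Hb Hl; split; [exists (0, t); reflexivity | split].
  - intros v ->; exists (fun _ => 0), (const_control_trajectory beta a 0 0 (0, t)).
    split; [apply admissible_const; unfold Omega; lra|].
    split; [apply const_control_solution, Hb|].
    intros tau _; unfold const_control_trajectory; simpl; f_equal; ring.
  - intros v -> y ->; apply closure2_self, reach_plus_refl; [exact Hb | lra].
Qed.

Theorem theorem2 (beta a gamma lo hi : R) :
  beta < 0 -> lo < 0 < hi ->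
  (gamma <> 0 ->
     control_set beta a gamma lo hi (fun p => Omega lo hi (fst p)) /\
     forall C : R * R -> Prop, control_set beta a gamma lo hi C ->
       forall p, C p <-> Omega lo hi (fst p)) /\
  (gamma = 0 -> a <> 0 ->
     forall t : R, control_set beta a gamma lo hi (fun p => p = (0, t))).
Proof.
  intros Hb Hl; assert (Hb0 : beta <> 0) by (apply Rlt_not_eq, Hb); split.
  - intros Hg.
    pose proof (strip_cs_props beta a gamma lo hi Hb Hg Hl) as Hstrip.
    split; [split; [exact Hstrip|] | intros C [HC Cmax] p; split].
    + intros D HD _ v Dv; exact (cs_props_fst_in_Omega _ _ _ _ _ _ _ Hb HD Dv).
    + exact (cs_props_fst_in_Omega _ _ _ _ _ _ _ Hb HC).
    + apply (Cmax _ Hstrip); intros v Cv; exact (cs_props_fst_in_Omega _ _ _ _ _ _ _ Hb HC Cv).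
  - intros -> Ha t; split; [apply point_cs_props; [exact Hb0 | lra]|].
    intros D HD HtD [s t'] Dz.
    assert (Dt : D (0, t)) by (apply HtD; reflexivity).
    assert (Hs : s = 0) by exact (cs_props_fst_zero _ _ _ _ _ _ Hb0 Ha HD Dz).
    assert (HL1 := cs_props_lyapunov_le _ _ _ _ _ _ _ Hb0 HD Dz Dt).
    assert (HL2 := cs_props_lyapunov_le _ _ _ _ _ _ _ Hb0 HD Dt Dz).
    subst s; unfold lyapunov in HL1, HL2; simpl in HL1, HL2.
    f_equal; apply (Rmult_eq_reg_l a); [lra | exact Ha].
Qed.
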